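(* Let $k\ge2$, let $\chi_1,\chi_2$ be primitive non-trivial Dirichlet characters with conductors $q_1,q_2$ and $\chi_1\chi_2(-1)=(-1)^k$. For $\gamma\in\Gamma_\infty$ and $\gamma'\in\Gamma_0(q_1q_2)$ with nonzero lower-left entry, $S_{\chi_1,\chi_2,k}(\gamma\gamma')=S_{\chi_1,\chi_2,k}(\gamma')$.
   Context: $\Gamma_\infty=\{\pm\begin{pmatrix}1&n\\0&1\end{pmatrix}:n\in\mathbb Z\}$. Notation: $e(z)=\exp(2\pi iz)$, $\tau(\chi)$ the Gauss sum. $E_{\chi_1,\chi_2,k}(z)=2\sum_{N\ge1}\sum_{A\mid N}\chi_1(A)\overline{\chi_2}(N/A)(N/A)^{k-1}e(Nz)$ on the upper half plane; $P_{k-2}(z;X,Y)=(Xz+Y)^{k-2}$. For $\gamma=\begin{pmatrix}a&b\\c&d\end{pmatrix}\in\Gamma_0(q_1q_2)$ with $c\ne0$, $S_{\chi_1,\chi_2,k}(\gamma)=(-1)^k\tau(\overline{\chi_1})(k-1)\int_\infty^{\gamma\infty}E_{\chi_1,\chi_2,k}(z)P_{k-2}(z;1,-a/c)dz$. *)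

From Stdlib Require Import Reals ZArith.
From Coquelicot Require Import Coquelicot.
Open Scope R_scope.

Definition dirichlet_char (q : Z) (chi : Z -> C) : Prop :=
  (1 <= q)%Z /\
  (forall m n : Z, chi (m * n)%Z = Cmult (chi m) (chi n)) /\
  (forall n : Z, chi (n + q)%Z = chi n) /\
  (forall n : Z, chi n <> RtoC 0 <-> Z.gcd n q = 1%Z).

(* chi is a primitive character modulo q, i.e. a character mod q of conductor q:
   it is not induced by a character of any proper modulus d | q, d < q, i.e.
   for every such d it is not trivial on the units congruent to 1 mod d. *)
Definition primitive_char (q : Z) (chi : Z -> C) : Prop :=
  dirichlet_char q chi /\
  (forall d : Z, (0 < d < q)%Z -> (d | q)%Z ->
     exists n : Z, Z.gcd n q = 1%Z /\ Z.modulo (n - 1) d = 0%Z /\ chi n <> RtoC 1).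

Definition nontrivial_char (q : Z) (chi : Z -> C) : Prop :=
  exists n : Z, Z.gcd n q = 1%Z /\ chi n <> RtoC 1.

Definition conj_char (chi : Z -> C) : Z -> C := fun n => Cconj (chi n).

(* e(z) = exp(2 pi i z) *)
Definition e (z : C) : C :=
  (exp (- 2 * PI * Im z) * cos (2 * PI * Re z),
   exp (- 2 * PI * Im z) * sin (2 * PI * Re z)).

Definition gauss_sum (q : Z) (chi : Z -> C) : C :=
  sum_n (fun a : nat => Cmult (chi (Z.of_nat a)) (e (RtoC (INR a / IZR q))))
        (Z.to_nat q - 1).

Definition CSeries (u : nat -> C) : C :=
  (Series (fun n => Re (u n)), Series (fun n => Im (u n))).

Definition eis_coeff (chi1 chi2 : Z -> C) (k : nat) (N : nat) : C :=
  sum_n (fun A : nat =>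
           if andb (0 <? A)%nat (N mod A =? 0)%nat then
             Cmult (Cmult (chi1 (Z.of_nat A)) (Cconj (chi2 (Z.of_nat (N / A)))))
                   (RtoC (INR (N / A) ^ (k - 1)))
           else RtoC 0) N.

Definition Eis (chi1 chi2 : Z -> C) (k : nat) (z : C) : C :=
  Cmult (RtoC 2)
    (CSeries (fun N : nat =>
       if (N =? 0)%nat then RtoC 0
       else Cmult (eis_coeff chi1 chi2 k N) (e (Cmult (RtoC (INR N)) z)))).

Definition Ppoly (k : nat) (z X Y : C) : C := Cpow (Cplus (Cmult X z) Y) (k - 2).

(* Path integral from i*infinity to the real point x0 along the vertical line
   z = x0 + i t (t from +infinity down to 0): int_oo^{x0} f(z) dz
   = RInt_gen (t |-> f(x0 + i t) * i) (t -> +oo) (t -> 0+). *)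
Definition int_infty_to (x0 : R) (f : C -> C) : C :=
  RInt_gen (V := C_R_CompleteNormedModule)
    (fun t : R => Cmult (f (x0, t)) Ci) (Rbar_locally p_infty) (at_right 0).

Record mat2 := Mat2 { ma : Z; mb : Z; mc : Z; md : Z }.

Definition mmul (g h : mat2) : mat2 :=
  Mat2 (ma g * ma h + mb g * mc h)%Z (ma g * mb h + mb g * md h)%Z
       (mc g * ma h + md g * mc h)%Z (mc g * mb h + md g * md h)%Z.

Definition in_Gamma0 (N : Z) (g : mat2) : Prop :=
  (ma g * md g - mb g * mc g = 1)%Z /\ Z.modulo (mc g) N = 0%Z.

Definition in_Gamma_infty (g : mat2) : Prop :=
  exists n : Z, g = Mat2 1 n 0 1 \/ g = Mat2 (-1) (-n) 0 (-1).

(* S_{chi1,chi2,k}(gamma), gamma = (a b; c d), gamma(oo) = a/c;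
   chi1 has conductor q1 (used in the Gauss sum). *)
Definition S_sym (q1 : Z) (chi1 chi2 : Z -> C) (k : nat) (g : mat2) : C :=
  let x0 := (IZR (ma g) / IZR (mc g))%R in
  Cmult (Cmult (Cmult (RtoC ((-1) ^ k)) (gauss_sum q1 (conj_char chi1)))
               (RtoC (INR k - 1)))
        (int_infty_to x0
           (fun z => Cmult (Eis chi1 chi2 k z) (Ppoly k z (RtoC 1) (RtoC (- x0))))).

From Stdlib Require Import Reals ZArith Lra Lia FunctionalExtensionality.
From Coquelicot Require Import Coquelicot.

(* An element of Gamma_infinity acts as the translation z |-> z + n, so it moves
   the cusp a/c of gamma' to a/c + n.  The integrand E(z) (z - a/c)^(k-2) is
   invariant under this translation together with the shift of the path: E is a
   Fourier series in the e(Nz), hence 1-periodic, and z - a/c is unchanged. *)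

Lemma periodic_nat_periodic_Z (f : R -> R) (p : R) :
  (forall x (k : nat), f (x + INR k * p) = f x) ->
  forall x (m : Z), f (x + IZR m * p) = f x.
Proof.
  intros Hf x m.
  destruct (Z_le_gt_dec 0 m) as [Hm | Hm].
  - rewrite <- (Z2Nat.id m Hm), <- INR_IZR_INZ. apply Hf.
  - rewrite <- (Hf (x + IZR m * p) (Z.to_nat (- m))).
    rewrite INR_IZR_INZ, Z2Nat.id, opp_IZR by lia.
    f_equal; ring.
Qed.

Lemma cos_period_Z (x : R) (m : Z) : cos (x + IZR m * (2 * PI)) = cos x.
Proof.
  apply periodic_nat_periodic_Z. intros y k.
  rewrite <- (cos_period y k). f_equal; ring.
Qed.

Lemma sin_period_Z (x : R) (m : Z) : sin (x + IZR m * (2 * PI)) = sin x.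
Proof.
  apply periodic_nat_periodic_Z. intros y k.
  rewrite <- (sin_period y k). f_equal; ring.
Qed.

Lemma e_add_IZR (z : C) (m : Z) : e (Cplus z (RtoC (IZR m))) = e z.
Proof.
  destruct z as [x y]. unfold e; simpl.
  replace (2 * PI * (x + IZR m)) with (2 * PI * x + IZR m * (2 * PI)) by ring.
  rewrite cos_period_Z, sin_period_Z, Rplus_0_r.
  reflexivity.
Qed.

Lemma Eis_add_IZR (chi1 chi2 : Z -> C) (k : nat) (z : C) (m : Z) :
  Eis chi1 chi2 k (Cplus z (RtoC (IZR m))) = Eis chi1 chi2 k z.
Proof.
  unfold Eis. do 2 f_equal. apply functional_extensionality. intros N.
  destruct (N =? 0)%nat; [reflexivity |].
  replace (Cmult (RtoC (INR N)) (Cplus z (RtoC (IZR m))))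
    with (Cplus (Cmult (RtoC (INR N)) z) (RtoC (IZR (Z.of_nat N * m)))).
  - rewrite e_add_IZR. reflexivity.
  - rewrite mult_IZR, <- INR_IZR_INZ.
    destruct z; apply injective_projections; simpl; ring.
Qed.

Lemma Ppoly_translate (k : nat) (z w X Y : C) :
  Ppoly k (Cplus z w) X (Cminus Y (Cmult X w)) = Ppoly k z X Y.
Proof. unfold Ppoly. f_equal. ring. Qed.

Lemma int_infty_to_translate (x a : R) (f : C -> C) :
  int_infty_to (x + a) f = int_infty_to x (fun z => f (Cplus z (RtoC a))).
Proof.
  unfold int_infty_to. f_equal. apply functional_extensionality. intros t.
  do 2 f_equal. apply injective_projections; simpl; ring.
Qed.

Definition cusp (g : mat2) : R := IZR (ma g) / IZR (mc g).

Lemma S_sym_cusp_add_IZR (q1 : Z) (chi1 chi2 : Z -> C) (k : nat) (g g' : mat2) (m : Z) :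
  cusp g = cusp g' + IZR m -> S_sym q1 chi1 chi2 k g = S_sym q1 chi1 chi2 k g'.
Proof.
  intros Hcusp. unfold S_sym; cbv zeta.
  change (IZR (ma g) / IZR (mc g)) with (cusp g).
  change (IZR (ma g') / IZR (mc g')) with (cusp g').
  rewrite Hcusp, int_infty_to_translate. f_equal.
  f_equal. apply functional_extensionality. intros z.
  rewrite Eis_add_IZR, <- (Ppoly_translate k z (RtoC (IZR m))).
  do 2 f_equal. apply injective_projections; simpl; ring.
Qed.

Lemma cusp_Gamma_infty_mul (g g' : mat2) :
  in_Gamma_infty g -> mc g' <> 0%Z -> exists n : Z, cusp (mmul g g') = cusp g' + IZR n.
Proof.
  intros [n [-> | ->]] Hc; exists n; destruct g' as [a b c d];
    unfold cusp; cbn [mmul ma mb mc md] in *;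
    apply not_0_IZR in Hc; rewrite ?plus_IZR, ?mult_IZR, ?opp_IZR; field; lra.
Qed.

Theorem lemma5p3 (k : nat) (q1 q2 : Z) (chi1 chi2 : Z -> C)
  (hk : (2 <= k)%nat)
  (h1 : primitive_char q1 chi1) (h2 : primitive_char q2 chi2)
  (n1 : nontrivial_char q1 chi1) (n2 : nontrivial_char q2 chi2)
  (hpar : Cmult (chi1 (-1)%Z) (chi2 (-1)%Z) = RtoC ((-1) ^ k))
  (g g' : mat2) (hg : in_Gamma_infty g)
  (hg' : in_Gamma0 (q1 * q2)%Z g') (hc : mc g' <> 0%Z) :
  S_sym q1 chi1 chi2 k (mmul g g') = S_sym q1 chi1 chi2 k g'.
Proof.
  destruct (cusp_Gamma_infty_mul g g' hg hc) as [n Hn].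
  exact (S_sym_cusp_add_IZR q1 chi1 chi2 k _ _ n Hn).
Qed.
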